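(* Let $k\in\mathbb{N}$ with $\gcd(k,6)=2$, let $h$ be an integer with $\gcd(h,k)=1$, and let $h'$ be an integer with $hh'\equiv-1\pmod{4k}$ and $3\mid h'$. Then $$\frac{\omega_{3h,\frac{k}{2}}\,\omega_{h,\frac{k}{2}}\,\omega_{h,k}}{\omega_{3h,k}}=\exp\!\left( \frac{2\pi i}{36k} \left( h (9+9k) + h'(-5+2k^2) \right)\right)$$ and $$\frac{\omega_{3h,k}\,\omega_{h,\frac{k}{2}}\,\omega_{h,k}}{\omega_{3h,\frac{k}{2}}^3} =-\exp\!\left( -\frac{2\pi i}{18k} \left(h ( 9+9k) + h'(1-k^2) \right)\right).$$
   Context: For coprime integers $h$ and $K\ge1$, $\omega_{h,K}=\exp(\pi i\, s(h,K))$, where $s(h,K)=\sum_{r=1}^{K-1}\frac{r}{K}\left(\frac{hr}{K}-\lfloor \frac{hr}{K}\rfloor-\frac12\right)$ is the Dedekind sum (the multiplier of the Dedekind eta function; equivalently given by Rademacher's explicit formula in terms of Kronecker symbols and an integer $\tilde h$ with $h\tilde h\equiv-1\pmod K$). *)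

From Stdlib Require Import Reals ZArith List.
From Coquelicot Require Import Coquelicot.
Open Scope R_scope.

Definition cexpi (t : R) : C := (cos t, sin t).

(* Dedekind sum s(h,K) = sum_{r=1}^{K-1} (r/K) (hr/K - floor(hr/K) - 1/2),
   for K >= 1; floor(hr/K) = Z.div (h*r) K since K > 0 (Z.div floors). *)
Definition dedekind_sum (h K : Z) : R :=
  fold_right Rplus 0
    (map (fun n : nat =>
            let r := Z.of_nat n in
            (IZR r / IZR K) *
            (IZR h * IZR r / IZR K - IZR (Z.div (h * r) K) - 1 / 2))
         (seq 1 (Z.to_nat K - 1))).

Definition omega (h K : Z) : C := cexpi (PI * dedekind_sum h K).

From Stdlib Require Import Reals ZArith.
From Coquelicot Require Import Coquelicot.
From Stdlib Require Import List Znumtheory Lia Lra Permutation.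
Open Scope R_scope.

(* Put [k = 2 m] and write [s(c, K) = N(c, K) / (12 K)] with
   [N(c, K) = 2 c (K - 1) (2 K - 1) - 3 K (K - 1) - 12 sum_r r floor(c r / K)].  Each identity
   amounts to the divisibility by [144 m] of an integer combination of [N(3h, m)], [N(h, m)],
   [N(h, 2m)], [N(3h, 2m)], [h] and [h'].  Divisibility by 9 is immediate from [3 | h'] and
   [3 ~| m].  As [r |-> c r mod K] permutes the nonzero residues, [c N(c, K)] is a polynomial
   in [c], [K] and [Q(c, K) = sum_r floor(c r / K)^2]; with [h h' = -1 (mod 8 m)], [h] times
   the combination becomes [m] times an expression whose vanishing modulo 16 is a congruence
   modulo 4 between the [Q]'s.  Pairing [r] with [K - r] reduces [Q(c, K)] modulo 4 to twice
   [G(c, K) = sum_(r <= (K - 1) / 2) floor(c r / K)] (plus [((c - 1) / 2)^2] when [K] is even),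
   and Gauss's folding of the residues gives [G(3c, K) - G(c, K)] modulo 2. *)

Section IntegerSums.
Local Open Scope Z_scope.

Definition zsum (n : nat) (f : Z -> Z) : Z :=
  fold_right Z.add 0 (map f (map Z.of_nat (seq 1 n))).

Lemma zsum_S n f : zsum (S n) f = zsum n f + f (Z.of_nat (S n)).
Proof.
  unfold zsum. rewrite seq_S, !map_app, fold_right_app. cbn [map fold_right].
  replace (1 + n)%nat with (S n) by lia.
  induction (map f (map Z.of_nat (seq 1 n))) as [|x l IH]; cbn [fold_right]; lia.
Qed.

Lemma zsum_ext n f g :
  (forall r, 1 <= r <= Z.of_nat n -> f r = g r) -> zsum n f = zsum n g.
Proof.
  induction n as [|n IH]; intros Hfg; [reflexivity|].
  rewrite !zsum_S, IH, Hfg; [reflexivity | lia | intros; apply Hfg; lia].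
Qed.

Lemma zsum_add n f g : zsum n (fun r => f r + g r) = zsum n f + zsum n g.
Proof. induction n; [reflexivity|]. rewrite !zsum_S. lia. Qed.

Lemma zsum_scale n c f : zsum n (fun r => c * f r) = c * zsum n f.
Proof. induction n; [cbn; lia|]. rewrite !zsum_S. lia. Qed.

Lemma zsum_sub n f g : zsum n (fun r => f r - g r) = zsum n f - zsum n g.
Proof. induction n; [reflexivity|]. rewrite !zsum_S. lia. Qed.

Lemma zsum_const n c : zsum n (fun _ => c) = c * Z.of_nat n.
Proof. induction n; [cbn; lia|]. rewrite !zsum_S. lia. Qed.

Lemma zsum_id n : 2 * zsum n (fun r => r) = Z.of_nat n * (Z.of_nat n + 1).
Proof. induction n; [reflexivity|]. rewrite !zsum_S. lia. Qed.

Lemma zsum_sq n :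
  6 * zsum n (fun r => r * r) = Z.of_nat n * (Z.of_nat n + 1) * (2 * Z.of_nat n + 1).
Proof. induction n; [reflexivity|]. rewrite !zsum_S. nia. Qed.

Lemma zsum_split n1 n2 f :
  zsum (n1 + n2) f = zsum n1 f + zsum n2 (fun r => f (Z.of_nat n1 + r)).
Proof.
  induction n2 as [|n2 IH]; [rewrite Nat.add_0_r; cbn; lia|].
  rewrite Nat.add_succ_r, !zsum_S, IH, <- Z.add_assoc. do 3 f_equal. lia.
Qed.

Lemma zsum_divide n d f :
  (forall r, 1 <= r <= Z.of_nat n -> (d | f r)) -> (d | zsum n f).
Proof.
  induction n as [|n IH]; intros Hd; [apply Z.divide_0_r|].
  rewrite zsum_S. apply Z.divide_add_r; [apply IH; intros; apply Hd|apply Hd]; lia.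
Qed.

Lemma zsum_reindex n f g :
  (forall r, 1 <= r <= Z.of_nat n -> 1 <= g r <= Z.of_nat n) ->
  (forall r1 r2, 1 <= r1 <= Z.of_nat n -> 1 <= r2 <= Z.of_nat n -> g r1 = g r2 -> r1 = r2) ->
  zsum n (fun r => f (g r)) = zsum n f.
Proof.
  intros Hrange Hinj. unfold zsum.
  set (l := map Z.of_nat (seq 1 n)).
  assert (Hl : forall r, In r l <-> 1 <= r <= Z.of_nat n).
  { intros r. unfold l. rewrite in_map_iff. split.
    - intros [x [<- Hx]]. apply in_seq in Hx. lia.
    - intros Hr. exists (Z.to_nat r). rewrite in_seq. lia. }
  assert (Hperm : Permutation (map g l) l).
  { apply Permutation_map_same_l.
    - apply FinFun.Injective_map_NoDup_in.
      + intros x y Hx Hy. apply Hinj; apply Hl; assumption.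
      + apply FinFun.Injective_map_NoDup; [intros x y; lia | apply seq_NoDup].
    - intros y Hy. apply in_map_iff in Hy. destruct Hy as [x [<- Hx]].
      apply Hl, Hrange, Hl, Hx. }
  rewrite <- (map_map g f). apply (Permutation_map f) in Hperm.
  induction Hperm; cbn [fold_right]; lia.
Qed.

Lemma zsum_pair_odd f L : 0 <= L ->
  zsum (Z.to_nat (2 * L)) f = zsum (Z.to_nat L) (fun r => f r + f (2 * L + 1 - r)).
Proof.
  intros HL. replace (Z.to_nat (2 * L)) with (Z.to_nat L + Z.to_nat L)%nat by lia.
  rewrite zsum_split, zsum_add. f_equal.
  rewrite <- (zsum_reindex _ (fun r => f (Z.of_nat (Z.to_nat L) + r)) (fun r => L + 1 - r))
    by (intros; lia).
  apply zsum_ext. intros. f_equal. lia.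
Qed.

Lemma zsum_pair_even f L : 0 <= L ->
  zsum (Z.to_nat (2 * L + 1)) f
  = zsum (Z.to_nat L) (fun r => f r + f (2 * L + 2 - r)) + f (L + 1).
Proof.
  intros HL. replace (Z.to_nat (2 * L + 1)) with (S (Z.to_nat L) + Z.to_nat L)%nat by lia.
  rewrite zsum_split, zsum_S, zsum_add.
  rewrite <- (zsum_reindex _ (fun r => f (Z.of_nat (S (Z.to_nat L)) + r)) (fun r => L + 1 - r))
    by (intros; lia).
  replace (Z.of_nat (S (Z.to_nat L))) with (L + 1) by lia.
  rewrite (zsum_ext _ (fun r => f (L + 1 + (L + 1 - r))) (fun r => f (2 * L + 2 - r)))
    by (intros; f_equal; lia).
  lia.
Qed.

End IntegerSums.

Section FloorSums.
Local Open Scope Z_scope.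

Definition weighted_floor_sum (c K : Z) : Z :=
  zsum (Z.to_nat (K - 1)) (fun r => r * (c * r / K)).
Definition floor_sq_sum (c K : Z) : Z :=
  zsum (Z.to_nat (K - 1)) (fun r => (c * r / K) * (c * r / K)).
Definition half_floor_sum (c K : Z) : Z :=
  zsum (Z.to_nat ((K - 1) / 2)) (fun r => c * r / K).

Variable K : Z.
Hypothesis HK : 0 < K.

Lemma divide_small x : (K | x) -> -K < x < K -> x = 0.
Proof.
  intros [y ->] Hx.
  destruct (Z.lt_trichotomy y 0) as [Hy | [-> | Hy]]; [nia | lia | nia].
Qed.

Lemma mul_mod_neq0 c r : rel_prime c K -> 0 < r < K -> (c * r) mod K <> 0.
Proof.
  intros Hc Hr Hmod. apply Z.mod_divide in Hmod; [|lia].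
  apply Gauss, divide_small in Hmod; [lia | lia | apply rel_prime_sym, Hc].
Qed.

Lemma mul_mod_inj c r1 r2 : rel_prime c K -> 0 < r1 < K -> 0 < r2 < K ->
  (c * r1) mod K = (c * r2) mod K -> r1 = r2.
Proof.
  intros Hc H1 H2 Hmod.
  assert (Hdiv : (K | c * (r1 - r2))).
  { exists (c * r1 / K - c * r2 / K).
    pose proof (Z.div_mod (c * r1) K). pose proof (Z.div_mod (c * r2) K). lia. }
  apply Gauss, divide_small in Hdiv; [lia | lia | apply rel_prime_sym, Hc].
Qed.

Lemma floor_mul_compl c r : rel_prime c K -> 0 < r < K ->
  c * (K - r) / K = c - 1 - c * r / K.
Proof.
  intros Hc Hr. pose proof (mul_mod_neq0 c r Hc Hr).
  pose proof (Z.mod_pos_bound (c * r) K HK). pose proof (Z.div_mod (c * r) K).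
  symmetry. apply (Z.div_unique_pos _ _ _ (K - (c * r) mod K)); lia.
Qed.

(* Squaring [c r = K floor(c r / K) + (c r mod K)] and summing over [r], the residues
   [c r mod K] run over [1, K - 1] again. *)
Lemma floor_sq_sum_eq c : rel_prime c K ->
  12 * c * weighted_floor_sum c K
  = (c * c - 1) * (K - 1) * (2 * K - 1) + 6 * K * floor_sq_sum c K.
Proof.
  intros Hc. unfold weighted_floor_sum, floor_sq_sum. set (n := Z.to_nat (K - 1)).
  assert (Hn : Z.of_nat n = K - 1) by lia.
  assert (Hres : zsum n (fun r => (c * r) mod K * ((c * r) mod K)) = zsum n (fun x => x * x)).
  { apply (zsum_reindex n (fun x => x * x) (fun r => (c * r) mod K)).
    - intros r Hr. pose proof (Z.mod_pos_bound (c * r) K HK).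
      pose proof (mul_mod_neq0 c r Hc ltac:(lia)). lia.
    - intros r1 r2 H1 H2. apply mul_mod_inj; auto; lia. }
  rewrite (zsum_ext _ _ (fun r => (c * c) * (r * r) + (-2 * c * K) * (r * (c * r / K))
                               + (K * K) * ((c * r / K) * (c * r / K)))) in Hres.
  2:{ intros r _. rewrite Z.mod_eq by lia. ring. }
  rewrite !zsum_add, !zsum_scale in Hres.
  pose proof (zsum_sq n) as Hsq. rewrite Hn in Hsq.
  apply (Z.mul_reg_l _ _ K); [lia|]. nia.
Qed.

Lemma floor_sq_pair_mod4 c a r : c = 2 * a + 1 -> rel_prime c K -> 0 < r < K ->
  (4 | (c * r / K) * (c * r / K) + (c * (K - r) / K) * (c * (K - r) / K) - 2 * (c * r / K)).
Proof.
  intros Hca Hc Hr. rewrite floor_mul_compl by assumption. rewrite Hca.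
  destruct (Z.Even_or_Odd ((2 * a + 1) * r / K)) as [[x ->] | [x ->]].
  - exists (x * x + (a - x) * (a - x) - x). ring.
  - exists (x * x + (a - x) * (a - x) - (a - x)). ring.
Qed.

Lemma floor_sq_sum_mod4_odd c a : K mod 2 = 1 -> c = 2 * a + 1 -> rel_prime c K ->
  (4 | floor_sq_sum c K - 2 * half_floor_sum c K).
Proof.
  intros HKodd Hca Hc. unfold floor_sq_sum, half_floor_sum.
  set (L := (K - 1) / 2).
  assert (HL : K = 2 * L + 1) by (unfold L; Z.to_euclidean_division_equations; lia).
  replace (Z.to_nat (K - 1)) with (Z.to_nat (2 * L)) by lia.
  rewrite zsum_pair_odd, <- HL, <- zsum_scale, <- zsum_sub by lia.
  apply zsum_divide. intros r Hr. apply (floor_sq_pair_mod4 c a); [assumption | assumption | lia].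
Qed.

Lemma floor_sq_sum_mod4_even c a : K mod 2 = 0 -> c = 2 * a + 1 -> rel_prime c K ->
  (4 | floor_sq_sum c K - 2 * half_floor_sum c K - a * a).
Proof.
  intros HKeven Hca Hc. unfold floor_sq_sum, half_floor_sum.
  set (L := (K - 1) / 2).
  assert (HL : K = 2 * L + 2) by (unfold L; Z.to_euclidean_division_equations; lia).
  assert (Hmid : c * (L + 1) / K = a).
  { symmetry. apply (Z.div_unique_pos _ _ _ (L + 1)); [lia | rewrite Hca, HL; ring]. }
  replace (Z.to_nat (K - 1)) with (Z.to_nat (2 * L + 1)) by lia.
  rewrite zsum_pair_even, <- HL, Hmid by lia.
  rewrite Z.add_sub_swap, Z.add_simpl_r, <- zsum_scale, <- zsum_sub.
  apply zsum_divide. intros r Hr. apply (floor_sq_pair_mod4 c a); [assumption | assumption | lia].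
Qed.

Lemma floor_sq_sum_mod4 c a : c = 2 * a + 1 -> rel_prime c K ->
  (4 | floor_sq_sum c K - 2 * half_floor_sum c K - (1 - K mod 2) * (a * a)).
Proof.
  intros Hca Hc.
  assert (HK2 : K mod 2 = 0 \/ K mod 2 = 1) by (Z.to_euclidean_division_equations; lia).
  destruct HK2 as [E | E]; rewrite E.
  - rewrite Z.mul_1_l. exact (floor_sq_sum_mod4_even c a E Hca Hc).
  - rewrite Z.sub_diag, Z.mul_0_l, Z.sub_0_r. exact (floor_sq_sum_mod4_odd c a E Hca Hc).
Qed.

Lemma half_floor_sum_3 : ~ (3 | K) -> half_floor_sum 3 K = (K - 1) / 2 - K / 3.
Proof.
  intros H3. unfold half_floor_sum.
  assert (Hmod3 : K mod 3 <> 0) by (intros E; apply H3, Z.mod_divide; [lia | exact E]).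
  set (L := (K - 1) / 2). set (j := K / 3).
  assert (HL : 2 * L <= K - 1 <= 2 * L + 1) by (unfold L; Z.to_euclidean_division_equations; lia).
  assert (Hj : 3 * j < K <= 3 * j + 2) by (unfold j; Z.to_euclidean_division_equations; lia).
  replace (Z.to_nat L) with (Z.to_nat j + Z.to_nat (L - j))%nat by lia.
  rewrite zsum_split.
  rewrite (zsum_ext _ (fun r => 3 * r / K) (fun _ => 0))
    by (intros r Hr; apply Z.div_small; lia).
  rewrite (zsum_ext _ (fun r => 3 * (Z.of_nat (Z.to_nat j) + r) / K) (fun _ => 1)).
  2:{ intros r Hr. symmetry. apply (Z.div_unique_pos _ _ _ (3 * (j + r) - K)); lia. }
  rewrite !zsum_const. lia.
Qed.

Definition half_rep (y : Z) : Z := if y <=? (K - 1) / 2 then y else K - y.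

Lemma mul_mod_add_neq c r1 r2 : rel_prime c K -> 0 < r1 -> 0 < r2 -> r1 + r2 < K ->
  (c * r1) mod K + (c * r2) mod K <> K.
Proof.
  intros Hc H1 H2 H12 Hsum.
  assert (Hdiv : (K | c * (r1 + r2))).
  { exists (c * r1 / K + c * r2 / K + 1).
    pose proof (Z.div_mod (c * r1) K). pose proof (Z.div_mod (c * r2) K). lia. }
  apply Gauss, divide_small in Hdiv; [lia | lia | apply rel_prime_sym, Hc].
Qed.

(* The permutation underlying Gauss's lemma on quadratic residues. *)
Lemma zsum_half_rep_reindex c f : rel_prime c K ->
  zsum (Z.to_nat ((K - 1) / 2)) (fun r => f (half_rep ((c * r) mod K)))
  = zsum (Z.to_nat ((K - 1) / 2)) f.
Proof.
  intros Hc. set (L := (K - 1) / 2).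
  assert (HL : 2 * L <= K - 1 <= 2 * L + 1) by (unfold L; Z.to_euclidean_division_equations; lia).
  assert (Hres : forall r, 1 <= r <= L -> 1 <= (c * r) mod K <= K - 1 /\ 2 * ((c * r) mod K) <> K).
  { intros r Hr. pose proof (Z.mod_pos_bound (c * r) K HK).
    pose proof (mul_mod_neq0 c r Hc ltac:(lia)).
    assert ((c * r) mod K + (c * r) mod K <> K) by (apply mul_mod_add_neq; auto; lia).
    lia. }
  apply zsum_reindex; rewrite Z2Nat.id by lia; unfold half_rep; fold L.
  - intros r Hr. destruct (Hres r Hr). destruct (Z.leb_spec ((c * r) mod K) L); lia.
  - intros r1 r2 Hr1 Hr2 Heq. destruct (Hres r1 Hr1), (Hres r2 Hr2).
    assert ((c * r1) mod K + (c * r2) mod K <> K) by (apply mul_mod_add_neq; auto; lia).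
    destruct (Z.leb_spec ((c * r1) mod K) L), (Z.leb_spec ((c * r2) mod K) L);
      solve [apply (mul_mod_inj c); auto; lia | lia].
Qed.

Lemma half_floor_sum_mul3 c : rel_prime c K -> ~ (3 | K) ->
  (2 | half_floor_sum (3 * c) K - half_floor_sum c K - ((K - 1) / 2 - K / 3)).
Proof.
  intros Hc H3. rewrite <- half_floor_sum_3 by assumption. unfold half_floor_sum.
  set (n := Z.to_nat ((K - 1) / 2)).
  assert (Hsplit : zsum n (fun r => 3 * c * r / K)
                   = 3 * zsum n (fun r => c * r / K) + zsum n (fun r => 3 * ((c * r) mod K) / K)).
  { rewrite <- zsum_scale, <- zsum_add. apply zsum_ext. intros r _.
    replace (3 * c * r) with (3 * (c * r / K) * K + 3 * ((c * r) mod K))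
      by (pose proof (Z.div_mod (c * r) K); lia).
    apply Z.div_add_l. lia. }
  assert (Hfold : zsum n (fun r => 3 * r / K) = zsum n (fun r => 3 * half_rep ((c * r) mod K) / K))
    by (symmetry; apply (zsum_half_rep_reindex c (fun y => 3 * y / K)), Hc).
  assert (Hpar : (2 | zsum n (fun r => 3 * ((c * r) mod K) / K)
                      - zsum n (fun r => 3 * half_rep ((c * r) mod K) / K))).
  { rewrite <- zsum_sub. apply zsum_divide. intros r Hr. unfold half_rep.
    assert (Hr' : 0 < (c * r) mod K < K).
    { assert (0 < r < K) by (unfold n in Hr; Z.to_euclidean_division_equations; lia).
      pose proof (Z.mod_pos_bound (c * r) K HK). pose proof (mul_mod_neq0 c r Hc). lia. }
    destruct (_ <=? _).
    - exists 0. lia.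
    - rewrite (floor_mul_compl 3) by (auto using prime_rel_prime, prime_3).
      exists (3 * ((c * r) mod K) / K - 1). lia. }
  destruct Hpar as [x Hx].
  exists (zsum n (fun r => c * r / K) + x). lia.
Qed.

End FloorSums.

Section Defects.
Local Open Scope Z_scope.

Definition dedekind_numer (c K : Z) : Z :=
  2 * c * (K - 1) * (2 * K - 1) - 3 * K * (K - 1) - 12 * weighted_floor_sum c K.

Lemma dedekind_numer_mul c K : 0 < K -> rel_prime c K ->
  c * dedekind_numer c K
  = (c * c + 1) * (K - 1) * (2 * K - 1) - 3 * c * K * (K - 1) - 6 * K * floor_sq_sum c K.
Proof.
  intros HK Hc. pose proof (floor_sq_sum_eq K HK c Hc). unfold dedekind_numer. lia.
Qed.

Lemma dedekind_numer_mul3_div3 c K : (3 | dedekind_numer (3 * c) K).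
Proof.
  exists (2 * c * (K - 1) * (2 * K - 1) - K * (K - 1) - 4 * weighted_floor_sum (3 * c) K).
  unfold dedekind_numer. ring.
Qed.

Lemma dedekind_numer_double_div3 c K :
  (3 | 2 * dedekind_numer c K + dedekind_numer c (2 * K)).
Proof.
  exists (2 * c * (2 * K - 1) * (2 * K - 1) - 2 * K * (K - 1) - 2 * K * (2 * K - 1)
          - 8 * weighted_floor_sum c K - 4 * weighted_floor_sum c (2 * K)).
  unfold dedekind_numer. ring.
Qed.

(* [72 m] times the difference of the two sides' arguments divided by [pi], in the first
   and in the second identity, once each Dedekind sum [s(c, K)] is written as
   [dedekind_numer c K / (12 K)] and [k = 2 m]. *)
Definition defect1 (m h h' : Z) : Z :=
  6 * dedekind_numer (3 * h) m + 6 * dedekind_numer h m + 3 * dedekind_numer h (2 * m)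
  - 3 * dedekind_numer (3 * h) (2 * m) - 2 * (h * (9 + 18 * m) + h' * (8 * m * m - 5)).
Definition defect2 (m h h' : Z) : Z :=
  3 * dedekind_numer (3 * h) (2 * m) + 6 * dedekind_numer h m + 3 * dedekind_numer h (2 * m)
  - 18 * dedekind_numer (3 * h) m - 72 * m + 4 * (h * (9 + 18 * m) + h' * (1 - 4 * m * m)).

Variables m h h' a : Z.
Hypotheses (Hm : 0 < m) (Hhm : rel_prime h m) (Ha : h = 2 * a + 1) (H3m : ~ (3 | m))
  (Hinv : (8 * m | h * h' + 1)) (H3h' : (3 | h')).

Lemma sq_pred_div3 : (3 | m * m - 1).
Proof.
  assert (Hmod : m mod 3 = 1 \/ m mod 3 = 2).
  { assert (m mod 3 <> 0) by (intros E; apply H3m, Z.mod_divide; [lia | exact E]).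
    pose proof (Z.mod_pos_bound m 3). lia. }
  pose proof (Z.div_mod m 3). set (q := m / 3) in *.
  destruct Hmod as [E | E]; rewrite E in *.
  - exists (q * (3 * q + 2)). nia.
  - exists ((q + 1) * (3 * q + 1)). nia.
Qed.

Lemma defect1_div9 : (9 | defect1 m h h').
Proof.
  destruct (dedekind_numer_mul3_div3 h m) as [x1 Hx1].
  destruct (dedekind_numer_mul3_div3 h (2 * m)) as [x4 Hx4].
  destruct (dedekind_numer_double_div3 h m) as [y Hy].
  destruct H3h' as [t Ht]. destruct sq_pred_div3 as [j Hj].
  exists (2 * x1 + y - x4 - 2 * h * (1 + 2 * m) - 2 * t * (8 * j + 1)).
  unfold defect1. rewrite Ht. replace (8 * m * m - 5) with (3 * (8 * j + 1)) by lia. lia.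
Qed.

Lemma defect2_div9 : (9 | defect2 m h h').
Proof.
  destruct (dedekind_numer_mul3_div3 h m) as [x1 Hx1].
  destruct (dedekind_numer_mul3_div3 h (2 * m)) as [x4 Hx4].
  destruct (dedekind_numer_double_div3 h m) as [y Hy].
  destruct H3h' as [t Ht]. destruct sq_pred_div3 as [j Hj].
  exists (x4 + y - 6 * x1 - 8 * m + 4 * h * (1 + 2 * m) - 4 * t * (4 * j + 1)).
  unfold defect2. rewrite Ht. replace (1 - 4 * m * m) with (- 3 * (4 * j + 1)) by lia. lia.
Qed.

Lemma coprime_h_2 : rel_prime h 2.
Proof. apply bezout_rel_prime, (Bezout_intro _ _ _ 1 (- a)). lia. Qed.

Lemma coprime_3_2m : rel_prime 3 (2 * m).
Proof.
  apply rel_prime_mult; [apply bezout_rel_prime, (Bezout_intro _ _ _ 1 (-1)); lia |].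
  apply prime_rel_prime; [apply prime_3 | exact H3m].
Qed.

Lemma coprime_3h_2m : rel_prime (3 * h) (2 * m).
Proof.
  apply rel_prime_sym, rel_prime_mult; apply rel_prime_sym; [exact coprime_3_2m |].
  apply rel_prime_mult; [exact coprime_h_2 | exact Hhm].
Qed.

Lemma coprime_h_2m : rel_prime h (2 * m).
Proof. apply (rel_prime_div (3 * h)); [exact coprime_3h_2m | exists 3; ring]. Qed.

Lemma coprime_3h_m : rel_prime (3 * h) m.
Proof.
  apply rel_prime_sym, (rel_prime_div (2 * m)); [apply rel_prime_sym, coprime_3h_2m |].
  exists 2. ring.
Qed.

Lemma not_div3_double : ~ (3 | 2 * m).
Proof.
  intros D. apply (Zrel_prime_neq_mod_0 (2 * m) 3); [lia | apply rel_prime_sym, coprime_3_2m |].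
  apply Z.mod_divide; [lia | exact D].
Qed.

Lemma half_third_diff_mod4 :
  (4 | 2 * (((m - 1) / 2 - m / 3) - ((2 * m - 1) / 2 - 2 * m / 3)) - (m + 2 + m mod 2)).
Proof.
  assert (m mod 3 <> 0) by (intros E; apply H3m, Z.mod_divide; [lia | exact E]).
  apply Z.mod_divide; [lia |]. Z.to_euclidean_division_equations. lia.
Qed.

Lemma floor_sq_combination_mod4 :
  (4 | floor_sq_sum (3 * h) m + 3 * floor_sq_sum h m + 3 * floor_sq_sum h (2 * m)
       - floor_sq_sum (3 * h) (2 * m) - (h * m - h + 3)) /\
  (4 | floor_sq_sum (3 * h) (2 * m) + 3 * floor_sq_sum h m + 3 * floor_sq_sum h (2 * m)
       - 3 * floor_sq_sum (3 * h) m - (h * m + 2 - 2 * h)).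
Proof.
  assert (H3h : 3 * h = 2 * (3 * a + 1) + 1) by lia.
  destruct (floor_sq_sum_mod4 m Hm (3 * h) (3 * a + 1) H3h coprime_3h_m) as [z1 Hz1].
  destruct (floor_sq_sum_mod4 m Hm h a Ha Hhm) as [z2 Hz2].
  destruct (floor_sq_sum_mod4 (2 * m) ltac:(lia) h a Ha coprime_h_2m) as [z3 Hz3].
  destruct (floor_sq_sum_mod4 (2 * m) ltac:(lia) (3 * h) (3 * a + 1) H3h coprime_3h_2m)
    as [z4 Hz4].
  destruct (half_floor_sum_mul3 m Hm h Hhm H3m) as [y1 Hy1].
  destruct (half_floor_sum_mul3 (2 * m) ltac:(lia) h coprime_h_2m not_div3_double) as [y2 Hy2].
  destruct half_third_diff_mod4 as [v Hv].
  assert (Heven : (2 * m) mod 2 = 0) by (Z.to_euclidean_division_equations; lia).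
  assert (Hpar : m mod 2 = 0 \/ m mod 2 = 1) by (Z.to_euclidean_division_equations; lia).
  rewrite Heven in Hz3, Hz4.
  destruct Hpar as [E | E]; rewrite E in Hz1, Hz2, Hv;
    destruct (Z.Even_or_Odd a) as [[b Hb] | [b Hb]]; subst;
    split; apply Zmod_divide; try discriminate; Z.to_euclidean_division_equations; lia.
Qed.

Lemma defect1_mul_div16 : (16 * m | h * defect1 m h h').
Proof.
  destruct Hinv as [w Hw]. assert (Hhh' : h * h' = w * (8 * m) - 1) by lia.
  destruct floor_sq_combination_mod4 as [[u Hu] _].
  assert (HQ : floor_sq_sum (3 * h) (2 * m) = floor_sq_sum (3 * h) m + 3 * floor_sq_sum h m
               + 3 * floor_sq_sum h (2 * m) - (h * m - h + 3) - u * 4) by lia.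
  replace (h * defect1 m h h')
    with (2 * (3 * h * dedekind_numer (3 * h) m) + 6 * (h * dedekind_numer h m)
          + 3 * (h * dedekind_numer h (2 * m)) - 3 * h * dedekind_numer (3 * h) (2 * m)
          - 2 * h * h * (9 + 18 * m) - 2 * (h * h') * (8 * m * m - 5))
    by (unfold defect1; ring).
  rewrite !dedekind_numer_mul, HQ, Hhh'
    by auto using coprime_3h_m, coprime_h_2m, coprime_3h_2m with zarith.
  exists (5 * w - 8 * m * m * w + 3 * m - 18 * a * a - 12 * a - 6 - 3 * h * m - 3 * u).
  rewrite Ha. ring.
Qed.

Lemma defect2_mul_div16 : (16 * m | h * defect2 m h h').
Proof.
  destruct Hinv as [w Hw]. assert (Hhh' : h * h' = w * (8 * m) - 1) by lia.
  destruct floor_sq_combination_mod4 as [_ [u Hu]].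
  assert (HQ : floor_sq_sum (3 * h) (2 * m) = 3 * floor_sq_sum (3 * h) m - 3 * floor_sq_sum h m
               - 3 * floor_sq_sum h (2 * m) + (h * m + 2 - 2 * h) + u * 4) by lia.
  replace (h * defect2 m h h')
    with (3 * h * dedekind_numer (3 * h) (2 * m) + 6 * (h * dedekind_numer h m)
          + 3 * (h * dedekind_numer h (2 * m)) - 6 * (3 * h * dedekind_numer (3 * h) m)
          - 72 * h * m + 4 * h * h * (9 + 18 * m) + 4 * (h * h') * (1 - 4 * m * m))
    by (unfold defect2; ring).
  rewrite !dedekind_numer_mul, HQ, Hhh'
    by auto using coprime_3h_m, coprime_h_2m, coprime_3h_2m with zarith.
  exists (2 * w - 8 * m * m * w + 3 * m - 3 * h - 3 * h * m + 9 * h * h - 3 - 3 * u).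
  ring.
Qed.

Lemma div144_of_div16_div9 C : (16 * m | h * C) -> (9 | C) -> (144 * m | C).
Proof.
  intros H16 H9.
  assert (Hh16 : rel_prime (16 * m) h).
  { apply rel_prime_sym, rel_prime_mult; [| exact Hhm].
    replace 16 with (2 * (2 * (2 * 2))) by reflexivity.
    repeat apply rel_prime_mult; exact coprime_h_2. }
  apply Gauss in H16; [| exact Hh16]. destruct H16 as [q ->].
  assert (H9m : rel_prime 9 (16 * m)).
  { apply rel_prime_mult.
    - apply bezout_rel_prime, (Bezout_intro _ _ _ (-7) 4). lia.
    - replace 9 with (3 * 3) by reflexivity. apply rel_prime_sym.
      apply rel_prime_mult; apply rel_prime_sym, prime_rel_prime; auto using prime_3. }
  rewrite Z.mul_comm in H9. apply Gauss in H9; [| exact H9m]. destruct H9 as [x ->].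
  exists x. ring.
Qed.

Lemma defects_div144 : (144 * m | defect1 m h h') /\ (144 * m | defect2 m h h').
Proof.
  split; apply div144_of_div16_div9;
    auto using defect1_mul_div16, defect1_div9, defect2_mul_div16, defect2_div9.
Qed.

End Defects.

Lemma fold_Rplus_app l1 l2 :
  fold_right Rplus 0 (l1 ++ l2) = fold_right Rplus 0 l1 + fold_right Rplus 0 l2.
Proof. induction l1 as [|x l1 IH]; cbn [app fold_right]; [| rewrite IH]; lra. Qed.

Lemma dedekind_partial_sum_eq c K n : IZR K <> 0 ->
  fold_right Rplus 0
    (map (fun n : nat =>
            let r := Z.of_nat n in
            (IZR r / IZR K) * (IZR c * IZR r / IZR K - IZR (c * r / K)%Z - 1 / 2))
         (seq 1 n))
  = IZR c * IZR (zsum n (fun r => r * r)%Z) / (IZR K * IZR K)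
    - IZR (zsum n (fun r => r * (c * r / K))%Z) / IZR K - IZR (zsum n (fun r => r)) / (2 * IZR K).
Proof.
  intros HK. induction n as [|n IH].
  - cbn. field. exact HK.
  - rewrite seq_S, map_app, fold_Rplus_app, IH, !zsum_S. cbn [map fold_right].
    replace (1 + n)%nat with (S n) by lia.
    rewrite !plus_IZR, !mult_IZR. field. exact HK.
Qed.

Ltac push_IZR :=
  repeat (rewrite mult_IZR || rewrite plus_IZR || rewrite minus_IZR || rewrite opp_IZR).

Lemma dedekind_sum_eq c K : (0 < K)%Z ->
  dedekind_sum c K = IZR (dedekind_numer c K) / (12 * IZR K).
Proof.
  intros HK. unfold dedekind_sum, dedekind_numer.
  assert (HK' : IZR K <> 0) by (apply not_0_IZR; lia).
  replace (Z.to_nat K - 1)%nat with (Z.to_nat (K - 1)) by lia.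
  rewrite dedekind_partial_sum_eq by exact HK'. fold (weighted_floor_sum c K).
  pose proof (zsum_id (Z.to_nat (K - 1))) as Hid. pose proof (zsum_sq (Z.to_nat (K - 1))) as Hsq.
  rewrite Z2Nat.id in Hid, Hsq by lia.
  apply (f_equal IZR) in Hid, Hsq. revert Hid Hsq. push_IZR. intros Hid Hsq.
  replace (IZR (zsum _ (fun r => r))) with ((IZR K - 1) * IZR K / 2)
    by (apply (Rmult_eq_reg_l 2); [rewrite Hid; field | lra]).
  replace (IZR (zsum _ (fun r => r * r)%Z)) with ((IZR K - 1) * IZR K * (2 * IZR K - 1) / 6)
    by (apply (Rmult_eq_reg_l 6); [rewrite Hsq; field | lra]).
  field. exact HK'.
Qed.

Lemma cexpi_add a b : Cmult (cexpi a) (cexpi b) = cexpi (a + b).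
Proof. unfold cexpi, Cmult. cbn. rewrite cos_plus, sin_plus. f_equal; ring. Qed.

Lemma cexpi_sub a b : Cdiv (cexpi a) (cexpi b) = cexpi (a - b).
Proof.
  unfold Cdiv. replace (a - b) with (a + - b) by ring. rewrite <- cexpi_add. f_equal.
  unfold cexpi, Cinv. cbn. rewrite cos_neg, sin_neg.
  replace (cos b * (cos b * 1) + sin b * (sin b * 1)) with 1
    by (pose proof (sin2_cos2 b); unfold Rsqr in *; lra).
  f_equal; field.
Qed.

Lemma cexpi_add_PI a : Copp (cexpi a) = cexpi (a + PI).
Proof. unfold cexpi, Copp. cbn. rewrite cos_plus, sin_plus, cos_PI, sin_PI. f_equal; ring. Qed.

Lemma cexpi_periodic a b n : a - b = 2 * PI * IZR n -> cexpi a = cexpi b.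
Proof.
  intros H. unfold cexpi.
  destruct (Z_le_gt_dec 0 n) as [Hn | Hn].
  - replace a with (b + 2 * INR (Z.to_nat n) * PI)
      by (rewrite INR_IZR_INZ, Z2Nat.id by lia; lra).
    rewrite cos_period, sin_period. reflexivity.
  - replace b with (a + 2 * INR (Z.to_nat (- n)) * PI)
      by (rewrite INR_IZR_INZ, Z2Nat.id, opp_IZR by lia; lra).
    rewrite cos_period, sin_period. reflexivity.
Qed.

Lemma gcd6_eq2_split k : Z.gcd k 6 = 2%Z -> exists m, k = (2 * m)%Z /\ ~ (3 | m)%Z.
Proof.
  intros Hg. assert (H2 : (2 | k)%Z) by (rewrite <- Hg; apply Z.gcd_divide_l).
  destruct H2 as [m ->]. exists m. split; [ring |].
  intros H3. assert (H32 : (3 | Z.gcd (m * 2) 6)%Z).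
  { apply Z.gcd_greatest; [apply Z.divide_mul_l, H3 | exists 2%Z; reflexivity]. }
  rewrite Hg in H32. destruct H32 as [x Hx]. lia.
Qed.

Lemma odd_of_coprime_double h m : Z.gcd h (2 * m) = 1%Z -> exists a, h = (2 * a + 1)%Z.
Proof.
  intros Hg. destruct (Z.Even_or_Odd h) as [[b Hb] | [a Ha]]; [| now exists a].
  assert (H2 : (2 | Z.gcd h (2 * m))%Z).
  { apply Z.gcd_greatest; [exists b | exists m]; lia. }
  rewrite Hg in H2. destruct H2 as [x Hx]. lia.
Qed.

Theorem lemma3p3 (k h h' : Z) :
  (0 < k)%Z -> Z.gcd k 6 = 2%Z -> Z.gcd h k = 1%Z ->
  (4 * k | h * h' + 1)%Z -> (3 | h')%Z ->
  Cdiv (Cmult (Cmult (omega (3 * h) (k / 2)) (omega h (k / 2))) (omega h k))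
       (omega (3 * h) k)
  = cexpi (2 * PI / (36 * IZR k) *
           (IZR h * (9 + 9 * IZR k) + IZR h' * (-5 + 2 * IZR k ^ 2)))
  /\
  Cdiv (Cmult (Cmult (omega (3 * h) k) (omega h (k / 2))) (omega h k))
       (Cmult (Cmult (omega (3 * h) (k / 2)) (omega (3 * h) (k / 2)))
              (omega (3 * h) (k / 2)))
  = Copp (cexpi (- (2 * PI / (18 * IZR k)) *
           (IZR h * (9 + 9 * IZR k) + IZR h' * (1 - IZR k ^ 2)))).
Proof.
  intros Hk Hgcd6 Hhk Hinv H3h'.
  destruct (gcd6_eq2_split k Hgcd6) as [m [-> H3m]].
  assert (Hm : (0 < m)%Z) by lia.
  replace (2 * m / 2)%Z with m by (rewrite Z.mul_comm, Z.div_mul; lia).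
  destruct (odd_of_coprime_double h m Hhk) as [a Ha].
  assert (Hhm : rel_prime h m).
  { apply rel_prime_sym, (rel_prime_div (2 * m)); [| exists 2%Z; ring].
    apply rel_prime_sym, Zgcd_1_rel_prime, Hhk. }
  assert (Hinv8 : (8 * m | h * h' + 1)%Z)
    by (replace (8 * m)%Z with (4 * (2 * m))%Z by ring; exact Hinv).
  destruct (defects_div144 m h h' a Hm Hhm Ha H3m Hinv8 H3h') as [[z1 Hz1] [z2 Hz2]].
  apply (f_equal IZR) in Hz1, Hz2. unfold defect1 in Hz1. unfold defect2 in Hz2.
  assert (HmR : 0 < IZR m) by (apply IZR_lt; exact Hm).
  unfold omega. rewrite !dedekind_sum_eq by lia. rewrite !cexpi_add, !cexpi_sub, cexpi_add_PI.
  revert Hz1 Hz2. push_IZR. intros Hz1 Hz2.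
  split.
  - apply (cexpi_periodic _ _ z1), (Rmult_eq_reg_r (144 * IZR m)); [| lra].
    rewrite (Rmult_assoc (2 * PI)), <- Hz1. field. lra.
  - apply (cexpi_periodic _ _ z2), (Rmult_eq_reg_r (144 * IZR m)); [| lra].
    rewrite (Rmult_assoc (2 * PI)), <- Hz2. field. lra.
Qed.
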